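(* Let $(X,d)$ be a metric space, $f:X\to X$ a Borel measurable map and $\mu$ an $f$-invariant (i.e. $\mu=\mu\circ f^{-1}$) Borel probability measure that is an expansive measure of $f$. Then for every $p\in X$, $\mu(W^s(p))=0$, where $W^s(p)=\{x\in X:\lim_{n\to\infty}d(f^n(x),f^n(p))=0\}$.
   Context: A Borel probability measure $\mu$ is an expansive measure of $f$ if there is $\delta>0$ with $\mu(\Phi_\delta(x))=0$ for all $x\in X$, where $\Phi_\delta(x)=\{y\in X: d(f^i(y),f^i(x))\le\delta \text{ for all } i\in\mathbb{N}\}$, $\mathbb{N}=\{0,1,2,\dots\}$. *)

From HB Require Import structures.
From mathcomp Require Import all_boot all_order all_algebra.
From mathcomp Require Import all_classical all_reals all_analysis.
Set Implicit Arguments. Unset Strict Implicit. Unset Printing Implicit Defensive.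
Import Order.TTheory GRing.Theory Num.Theory numFieldNormedType.Exports.
Local Open Scope classical_set_scope.
Local Open Scope ring_scope.

Definition is_metric (R : realType) (X : Type) (d : X -> X -> R) : Prop :=
  [/\ forall x y, 0 <= d x y,
      forall x y, d x y = 0 <-> x = y,
      forall x y, d x y = d y x &
      forall x y z, d x z <= d x y + d y z].

Definition dball (R : realType) (X : Type) (d : X -> X -> R) (x : X) (e : R)
  : set X := [set y | d x y < e].

Definition dopen (R : realType) (X : Type) (d : X -> X -> R) : set (set X) :=
  [set A | forall x, A x -> exists2 e : R, 0 < e & dball d x e `<=` A].

Definition borel_space (R : realType) (X : pointedType) (d : X -> X -> R) :=
  g_sigma_algebraType (dopen d).

Definition Phi (R : realType) (X : Type) (d : X -> X -> R) (f : X -> X)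
  (delta : R) (x : X) : set X :=
  [set y | forall i : nat, d (iter i f y) (iter i f x) <= delta].

Definition stable_set (R : realType) (X : Type) (d : X -> X -> R) (f : X -> X)
  (p : X) : set X :=
  [set x | (fun n : nat => d (iter n f x) (iter n f p)) @ \oo --> (0 : R)].

(* Along the orbit of a point x of W^s(p), the distance d(f^n x, f^n p)
   eventually stays below delta, i.e. f^N x lies in Phi_delta(f^N p) for some N.
   Hence W^s(p) is covered by the countably many sets f^-N(Phi_delta(f^N p)),
   each of which has measure mu(Phi_delta(f^N p)) = 0 by invariance of mu. *)
From HB Require Import structures.
From mathcomp Require Import all_boot all_order all_algebra.
From mathcomp Require Import all_classical all_reals all_analysis.
From mathcomp Require Import lra.

Set Implicit Arguments.
Unset Strict Implicit.
Unset Printing Implicit Defensive.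
Import Order.TTheory GRing.Theory Num.Theory numFieldNormedType.Exports.
Local Open Scope classical_set_scope.
Local Open Scope ring_scope.

Section metric_borel.
Variables (R : realType) (X : pointedType) (d : X -> X -> R).
Hypothesis d_metric : is_metric d.

Lemma measurable_closed_ball (q : X) (r : R) :
  measurable ([set y | d y q <= r] : set (borel_space d)).
Proof.
case: d_metric => _ _ dC dT.
rewrite -[X in measurable X]setCK; apply: measurableC.
apply: sub_sigma_algebra => y /= /negP; rewrite -ltNge => ry.
exists (d y q - r); first by rewrite subr_gt0.
move=> z; rewrite /dball /= => yz; apply/negP; rewrite -ltNge.
have := dT y z q; lra.
Qed.

Section iterates.
Variable f : X -> X.

Lemma stable_setP (p x : X) : stable_set d f p x <->
  forall e, 0 < e -> \forall n \near \oo, d (iter n f x) (iter n f p) <= e.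
Proof.
have d_ge0 : forall y z, 0 <= d y z by case: d_metric.
rewrite /stable_set /=; split.
- move=> /cvgrPdist_le dist_le e e0.
  by apply: filterS (dist_le e e0) => n; rewrite sub0r normrN ger0_norm.
- move=> dist_le; apply/cvgrPdist_le => e e0.
  by apply: filterS (dist_le e e0) => n; rewrite sub0r normrN ger0_norm.
Qed.

Lemma stable_set_sub_bigcup_Phi (delta : R) (p : X) : 0 < delta ->
  stable_set d f p `<=` \bigcup_N (iter N f @^-1` Phi d f delta (iter N f p)).
Proof.
move=> delta0 x /stable_setP /(_ delta delta0) [N _ dist_le].
exists N => // i /=; rewrite -!iterD.
exact: (dist_le (i + N)%N (leq_addl _ _)).
Qed.

Lemma stable_setE (p : X) : stable_set d f p =
  \bigcap_k \bigcup_N \bigcap_n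
    (iter (N + n) f @^-1` [set y | d y (iter (N + n) f p) <= k.+1%:R^-1]).
Proof.
apply/seteqP; split => x.
- move=> /stable_setP dist_le k _.
  have [N _ dist_leN] := dist_le k.+1%:R^-1 ltac:(by []).
  by exists N => // n _; exact: (dist_leN (N + n)%N (leq_addr _ _)).
- move=> dist_le; apply/stable_setP => e e0.
  have [k _ /(_ k (leqnn k)) ke] := near_infty_natSinv_lt (PosNum e0).
  have [N _ dist_leN] := dist_le k I.
  exists N => // n Nn; have := dist_leN (n - N)%N I; rewrite /= subnKC // => h.
  exact: le_trans h (ltW ke).
Qed.

Hypothesis mf : measurable_fun [set: borel_space d]
  (f : borel_space d -> borel_space d).

Lemma measurable_iter n : measurable_fun [set: borel_space d]
  (iter n f : borel_space d -> borel_space d).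
Proof.
elim: n => [|n IH] /=; first exact: measurable_id.
exact: measurableT_comp mf IH.
Qed.

Lemma measurable_preimage_iter n (A : set (borel_space d)) : measurable A ->
  measurable (iter n f @^-1` A : set (borel_space d)).
Proof. by move=> mA; rewrite -[X in measurable X]setTI; exact: measurable_iter. Qed.

Lemma measurable_Phi (delta : R) (x : X) :
  measurable (Phi d f delta x : set (borel_space d)).
Proof.
have -> : Phi d f delta x =
    \bigcap_i (iter i f @^-1` [set y | d y (iter i f x) <= delta]).
  by apply/seteqP; split => y Phi_y i //=; exact: Phi_y.
apply: bigcapT_measurable => i.
by apply: measurable_preimage_iter; exact: measurable_closed_ball.
Qed.

Lemma measurable_stable_set (p : X) :
  measurable (stable_set d f p : set (borel_space d)).
Proof.
rewrite stable_setE; apply: bigcapT_measurable => k.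
apply: bigcupT_measurable => N; apply: bigcapT_measurable => n.
by apply: measurable_preimage_iter; exact: measurable_closed_ball.
Qed.

Variable mu : set (borel_space d) -> \bar R.
Hypothesis f_invariant :
  forall A : set (borel_space d), measurable A -> mu (f @^-1` A) = mu A.

Lemma measure_preimage_iter n (A : set (borel_space d)) : measurable A ->
  mu (iter n f @^-1` A) = mu A.
Proof.
elim: n A => [|n IH] A mA //=.
have mfA : measurable (f @^-1` A : set (borel_space d)).
  by rewrite -[X in measurable X]setTI; exact: mf.
by rewrite -(f_invariant mA) -(IH _ mfA).
Qed.

End iterates.
End metric_borel.

Theorem proposition3p2 (R : realType) (X : pointedType) (d : X -> X -> R)
  (f : X -> X)
  (mu : probability (borel_space d) R) :
  is_metric d ->
  measurable_fun [set: borel_space d] (f : borel_space d -> borel_space d) ->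
  (forall A : set (borel_space d), measurable A -> mu (f @^-1` A) = mu A) ->
  (exists2 delta : R, 0 < delta & forall x : X, mu (Phi d f delta x) = 0%E) ->
  forall p : X, mu (stable_set d f p) = 0%E.
Proof.
move=> d_metric mf f_invariant [delta delta0 Phi_null] p.
have cover_null : mu.-negligible
    (\bigcup_N (iter N f @^-1` Phi d f delta (iter N f p) : set (borel_space d))).
  apply: negligible_bigcup => N; apply/negligibleP.
    exact: measurable_preimage_iter mf _ _ (measurable_Phi d_metric mf _ _).
  rewrite -(Phi_null (iter N f p)).
  apply: (measure_preimage_iter mf f_invariant N).
  exact: (measurable_Phi d_metric mf delta (iter N f p)).
have cover : (stable_set d f p : set (borel_space d)) `<=`
    \bigcup_N (iter N f @^-1` Phi d f delta (iter N f p) : set (borel_space d)).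
  exact: (stable_set_sub_bigcup_Phi d_metric (f:=f) (p:=p) delta0).
apply/negligibleP; first exact: (measurable_stable_set d_metric mf p).
exact: negligibleS cover cover_null.
Qed.
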